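(* Let $\mathcal A$ be a class of spaces and let $X$ be a compactum with a binary normal closed subbase $\mathcal S$ such that the superextension $\lambda X$ is an absolute extensor for all spaces in $\mathcal A$. Then every open $\mathcal S$-convex continuous surjection $f\colon X\to Y$ is $\mathcal A$-soft.
   Context: All spaces are Tychonoff and maps continuous. A space $K$ is an absolute extensor for $Z$ if every continuous map from a closed subset of $Z$ to $K$ extends continuously to $Z$. A map $f\colon X\to Y$ is $\mathcal A$-soft if for any $Z\in\mathcal A$, closed $A\subset Z$ and continuous $k\colon Z\to Y$, $h\colon A\to X$ with $f\circ h=k|A$, there is a continuous $g\colon Z\to X$ extending $h$ with $f\circ g=k$. A family of sets is linked if any two members intersect. The superextension $\lambda X$ is the set of all maximal linked systems of closed subsets of $X$ with the topology generated by the subbase $\{U^+:U\subset X\text{ open}\}$, $U^+=\{\eta\in\lambda X:F\subset U\text{ for some }F\in\eta\}$. A family $\mathcal S$ of closed subsets of $X$ is a closed subbase if every closed set is an intersection of finite unions of members of $\mathcal S$; it is binary if every linked subfamily has nonempty intersection; it is normal if for every disjoint $S_0,S_1\in\mathcal S$ there exist $T_0,T_1\in\mathcal S$ with $S_0\cap T_1=\varnothing=T_0\cap S_1$ and $T_0\cup T_1=X$. For $B\subset X$, $I_{\mathcal S}(B)=\bigcap\{S\in\mathcal S:B\subset S\}$; $B$ is $\mathcal S$-convex if $I_{\mathcal S}(\{x,y\})\subset B$ for all $x,y\in B$; $f$ is $\mathcal S$-convex if all its fibers are $\mathcal S$-convex. *)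

From HB Require Import structures.
From mathcomp Require Import all_boot all_order.
From mathcomp Require Import all_classical.
From mathcomp Require Import topology normedtype.
Set Implicit Arguments. Unset Strict Implicit. Unset Printing Implicit Defensive.
Local Open Scope classical_set_scope.

Definition tychonoff_space (T : topologicalType) : Prop :=
  completely_regular_space T /\ hausdorff_space T.

Definition compactum (T : topologicalType) : Prop :=
  compact [set: T] /\ hausdorff_space T.

Definition linked {X : Type} (L : set (set X)) : Prop :=
  forall A B, L A -> L B -> A `&` B !=set0.

Definition mls {X : topologicalType} (eta : set (set X)) : Prop :=
  [/\ (forall F, eta F -> closed F), linked eta &
      forall eta' : set (set X), (forall F, eta' F -> closed F) ->
        linked eta' -> eta `<=` eta' -> eta' = eta].

Record superext (X : topologicalType) := Superext {
  sx_sys :> set (set X);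
  sx_mls : mls sx_sys }.

Definition plus_set {X : topologicalType} (U : set X) : set (superext X) :=
  [set eta | exists2 F, sx_sys eta F & F `<=` U].

HB.instance Definition _ (X : topologicalType) := gen_eqMixin (superext X).
HB.instance Definition _ (X : topologicalType) := gen_choiceMixin (superext X).
HB.instance Definition _ (X : topologicalType) :=
  @isSubBaseTopological.Build (superext X) (set X) (@open X) (@plus_set X).

(** K is an absolute extensor for Z. Maps from a closed subset B of Z are
    represented as functions on Z continuous on B (subspace topology). *)
Definition AE_for (K Z : topologicalType) : Prop :=
  forall (B : set Z) (g : Z -> K), closed B -> {within B, continuous g} ->
    exists G : Z -> K, continuous G /\ forall z, B z -> G z = g z.

Definition space_class := topologicalType -> Prop.

Definition soft (A : space_class) {X Y : topologicalType} (f : X -> Y) : Prop :=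
  forall (Z : topologicalType), A Z ->
  forall (B : set Z) (k : Z -> Y) (h : Z -> X),
    closed B -> continuous k -> {within B, continuous h} ->
    (forall z, B z -> f (h z) = k z) ->
    exists g : Z -> X, [/\ continuous g, (forall z, B z -> g z = h z) &
                          forall z, f (g z) = k z].

Definition fin_union {X : Type} (S : set (set X)) (G : set X) : Prop :=
  exists s : seq (set X), (forall A, A \in s -> S A) /\
    G = \big[setU/set0]_(A <- s) A.

Definition closed_subbase {X : topologicalType} (S : set (set X)) : Prop :=
  (forall A, S A -> closed A) /\
  forall F : set X, closed F ->
    exists FF : set (set X), FF `<=` fin_union S /\ F = \bigcap_(G in FF) G.

Definition binary_family {X : Type} (S : set (set X)) : Prop :=
  forall L : set (set X), L `<=` S -> linked L -> \bigcap_(A in L) A !=set0.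

Definition normal_family {X : Type} (S : set (set X)) : Prop :=
  forall S0 S1, S S0 -> S S1 -> S0 `&` S1 = set0 ->
    exists T0 T1, [/\ S T0, S T1, S0 `&` T1 = set0, T0 `&` S1 = set0 &
                      T0 `|` T1 = setT].

Definition I_S {X : Type} (S : set (set X)) (B : set X) : set X :=
  \bigcap_(A in [set A | S A /\ B `<=` A]) A.

Definition S_convex {X : Type} (S : set (set X)) (B : set X) : Prop :=
  forall x y, B x -> B y -> I_S S [set x; y] `<=` B.

Definition S_convex_map {X Y : Type} (S : set (set X)) (f : X -> Y) : Prop :=
  forall y, S_convex S (f @^-1` [set y]).

Definition open_map {X Y : topologicalType} (f : X -> Y) : Prop :=
  forall U : set X, open U -> open (f @` U).

From HB Require Import structures.
From mathcomp Require Import all_boot all_order.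
From mathcomp Require Import all_classical.
From mathcomp Require Import topology normedtype.
From mathcomp Require Import finmap.

(* Compose the partial lift h with the embedding x |-> {closed F | x \in F} of
   X into lambda X, extend it to a map Psi : Z -> lambda X, using that lambda X
   is an absolute extensor for Z, and push Psi back into X along the fibres of
   f: for y in Y and eta in lambda X let rho(y, eta) be the unique point of
   f^-1(y) lying in every member of S \cap eta that meets f^-1(y).  Binarity
   of S and convexity of the fibres give the finite intersection property of
   these sets, so rho(y, eta) exists by compactness; normality of S gives
   uniqueness and, together with the openness of f and of the sets U^+,
   continuity of rho.  Since rho(f x, {closed F | x \in F}) = x, the map
   z |-> rho(k z, Psi z) is the required lift of k extending h. *)

Set Implicit Arguments.
Unset Strict Implicit.
Unset Printing Implicit Defensive.
Local Open Scope classical_set_scope.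

Lemma cover_subC (T : Type) (A B : set T) : A `|` B = setT -> ~` B `<=` A.
Proof.
move=> AB x nBx; have : (A `|` B) x by rewrite AB.
by case=> // /nBx.
Qed.

Section MaximalLinkedSystems.
Variables (X : topologicalType) (eta : set (set X)).
Hypothesis eta_mls : mls eta.

Lemma mls_linked A B : eta A -> eta B -> A `&` B !=set0.
Proof. by case: eta_mls => _ + _; apply. Qed.

Lemma mls_adjoin T : closed T -> T !=set0 ->
  (forall H, eta H -> H `&` T !=set0) -> eta T.
Proof.
case: eta_mls => eta_closed eta_linked eta_max cT T0 T_meets.
suff <- : eta `|` [set T] = eta by right.
apply: eta_max; first by move=> F [/eta_closed|->].
  move=> A B [eA|->] [eB|->]; first exact: eta_linked.
  - exact: T_meets.
  - by rewrite setIC; exact: T_meets.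
  - by rewrite setIid.
by move=> F; left.
Qed.

Lemma mls_superset G T : eta G -> closed T -> G `<=` T -> eta T.
Proof.
move=> eG cT GT; apply: mls_adjoin => // [|H /mls_linked/(_ eG) [x [Hx Gx]]].
  by have [x [Gx _]] := mls_linked eG eG; exists x; exact: GT.
by exists x; split; last exact: GT.
Qed.

Lemma mls_disjoint T : [set: X] !=set0 -> closed T -> ~ eta T ->
  exists2 G, eta G & G `&` T = set0.
Proof.
move=> [x _] cT etaT; have [->|/set0P T0] := eqVneq T set0.
  exists setT; last by rewrite setI0.
  apply: mls_adjoin => [|//|H eH]; [exact: closedT|by exists x|].
  by rewrite setIT; have := mls_linked eH eH; rewrite setIid.
apply: contrapT => noG; apply: etaT; apply: mls_adjoin => // H eH.
by apply/set0P/eqP => HT; apply: noG; exists H.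
Qed.

End MaximalLinkedSystems.

Section SubbaseSeparation.
Variables (X : topologicalType) (S : set (set X)).
Hypotheses (S_subbase : closed_subbase S) (X_T1 : forall x : X, closed [set x]).

Lemma subbase_closed T : S T -> closed T.
Proof. by case: S_subbase => + _; apply. Qed.

Lemma subbase_separates p q : p <> q -> exists T, [/\ S T, T p & ~ T q].
Proof.
move=> pq; case: S_subbase => _ /(_ _ (@X_T1 p)) [FF [FF_fin pE]].
have /existsNP [G /not_implyP [FFG nGq]] : ~ (\bigcap_(G in FF) G) q.
  by rewrite -pE => /= qp; apply: pq.
have : [set p] p by [].
rewrite pE => /(_ G FFG); have [s [sS Gs]] := FF_fin G FFG.
rewrite Gs -bigcup_seq in nGq * => -[T sT Tp].
exists T; split => //; first exact: sS.
by move=> Tq; apply: nGq; exists T.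
Qed.

Hypothesis S_binary : binary_family S.

Lemma binary_subbase_separates p q : p <> q ->
  exists S0 S1, [/\ S S0, S S1, S0 p, S1 q & S0 `&` S1 = set0].
Proof.
move=> pq; have [T [ST Tp nTq]] := subbase_separates pq.
pose L := [set U | U = T \/ S U /\ U q].
have LS : L `<=` S by move=> U [->|[]].
(* The intersection of L is empty, so binarity yields two disjoint members. *)
have /existsNP [A /existsNP [B /not_implyP [LA /not_implyP [LB]]]] :
    ~ linked L.
  move=> /(S_binary LS) [w Lw].
  have qw : q <> w by move=> qw; apply: nTq; rewrite qw; apply: Lw; left.
  have [V [SV Vq nVw]] := subbase_separates qw.
  by apply: nVw; apply: Lw; right.
move=> /set0P/negP/negPn/eqP.
case: LA LB => [->|[SA Aq]] [->|[SB Bq]] AB0.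
- by rewrite setIid in AB0; rewrite AB0 in Tp.
- by exists T, B; split.
- by exists T, A; split; rewrite // setIC.
- by have : (A `&` B) q by []; rewrite AB0.
Qed.

Hypothesis S_normal : normal_family S.

Lemma normal_subbase_cover p q : p <> q ->
  exists T0 T1,
    [/\ S T0, S T1, T0 `|` T1 = setT, (T0 `\` T1) p & (T1 `\` T0) q].
Proof.
move=> pq; have [S0 [S1 [SS0 SS1 S0p S1q S01]]] := binary_subbase_separates pq.
have [T0 [T1 [ST0 ST1 /disjoints_subset S0T1 /disjoints_subset T0S1 T01]]] :=
  S_normal SS0 SS1 S01.
have nT1p : ~ T1 p by exact: S0T1.
have nT0q : ~ T0 q by move/T0S1.
exists T0, T1; split => //; split => //.
  exact: (cover_subC T01).
by apply: (cover_subC (B := T0)); rewrite // setUC.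
Qed.

End SubbaseSeparation.

Lemma binary_convex_meets (T : Type) (S M : set (set T)) (C : set T) a b :
  binary_family S -> S_convex S C -> C a -> C b ->
  M `<=` S -> linked M -> (forall U, M U -> U a \/ U b) ->
  exists2 w, C w & (\bigcap_(U in M) U) w.
Proof.
move=> S_binary C_convex Ca Cb MS M_linked M_ab.
pose L := M `|` [set U | S U /\ U a /\ U b].
have LS : L `<=` S by move=> U [/MS|[]].
have L_linked : linked L.
  move=> U V [MU|[_ [Ua Ub]]] [MV|[_ [Va Vb]]]; first exact: M_linked.
  - by case: (M_ab _ MU); [exists a|exists b].
  - by case: (M_ab _ MV); [exists a|exists b].
  - by exists a.
have [w Lw] := S_binary _ LS L_linked.
exists w; last by move=> U MU; apply: Lw; left.
apply: (C_convex a b Ca Cb) => U [SU abU].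
by apply: Lw; right; split => //; split; apply: abU; [left|right].
Qed.

Lemma plus_set_open (X : topologicalType) (U : set X) :
  open U -> open (plus_set U : set (superext X)).
Proof.
move=> oU; exists [set plus_set U]; last by rewrite bigcup_set1.
by move=> _ ->; exact: finI_from1.
Qed.

Section PointSystems.
Variable X : topologicalType.
Hypothesis X_T1 : forall x : X, closed [set x].

Lemma point_mls (x : X) : mls [set F : set X | closed F /\ F x].
Proof.
split; [by move=> F []|by move=> A B [_ Ax] [_ Bx]; exists x|].
move=> eta eta_closed eta_linked sub; apply/seteqP; split; last exact: sub.
move=> G eG; split; first exact: eta_closed.
by have [w [Gw <-]] := eta_linked _ _ eG (sub _ (conj (@X_T1 x) erefl)).
Qed.

Definition point_system (x : X) : superext X := Superext (point_mls x).

Lemma point_system_continuous : continuous point_system.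
Proof.
(* point_system x \in U^+ iff x \in U, witnessed by the closed set [set x]. *)
move=> x W; rewrite nbhsE => -[B [[Ds Ds_fin DsB] Bx] BW].
move: Bx; rewrite -DsB => -[V DsV Vx].
have [D D_plus DV] := Ds_fin _ DsV; move: Vx; rewrite -DV => Vx.
rewrite /= nbhs_filterE.
apply: (@filterS _ _ _ (\bigcap_(U in [set` D]) U)); last first.
  apply: filter_bigI => U DU; apply: open_nbhs_nbhs; split.
    by have /set_mem := D_plus _ DU.
  by have [F [_ Fx] FU] := Vx _ DU; exact: FU.
move=> z Dz; apply: BW; rewrite -DsB; exists V => //; rewrite -DV.
move=> U DU; exists [set z]; first by split => //; exact: (@X_T1 z).
by move=> w ->; exact: Dz.
Qed.

End PointSystems.

Section Selection.
Variables (X Y : topologicalType) (S : set (set X)) (f : X -> Y) (x0 : X).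
Hypotheses (S_subbase : closed_subbase S) (X_T1 : forall x : X, closed [set x]).
Hypotheses (S_binary : binary_family S) (S_normal : normal_family S).
Hypotheses (X_compact : compact [set: X]) (Y_hausdorff : hausdorff_space Y).
Hypotheses (f_cont : continuous f) (f_surj : forall y, exists x, f x = y).
Hypotheses (f_open : open_map f) (f_convex : S_convex_map S f).

Let X_nonempty : [set: X] !=set0. Proof. by exists x0. Qed.

Let S_closed T : S T -> closed T. Proof. exact: subbase_closed. Qed.

Let S_cover := normal_subbase_cover S_subbase X_T1 S_binary S_normal.

Let closed_fibre y : closed (f @^-1` [set y]).
Proof.
apply: (iffLR (continuous_closedP f)) => //.
by apply: accessible_closed_set1; exact: hausdorff_accessible.
Qed.

Definition subbase_trace (y : Y) (eta : set (set X)) : set (set X) :=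
  [set T | [/\ S T, eta T & T `&` f @^-1` [set y] !=set0]].

Definition selection (y : Y) (eta : set (set X)) : set X :=
  f @^-1` [set y] `&` \bigcap_(T in subbase_trace y eta) T.

Lemma selection_unique y eta a b : mls eta ->
  selection y eta a -> selection y eta b -> a = b.
Proof.
move=> eta_mls [fa sa] [fb sb]; apply: contrapT => ab.
have [T0 [T1 [ST0 ST1 T01 [T0a nT1a] [T1b nT0b]]]] := S_cover ab.
have nT0 : ~ eta T0.
  by move=> eT0; apply: nT0b; apply: sb; split => //; exists a.
have nT1 : ~ eta T1.
  by move=> eT1; apply: nT1a; apply: sa; split => //; exists b.
have [G0 eG0 /disjoints_subset G0T0] :=
  mls_disjoint eta_mls X_nonempty (S_closed ST0) nT0.
have [G1 eG1 /disjoints_subset G1T1] :=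
  mls_disjoint eta_mls X_nonempty (S_closed ST1) nT1.
have [w [G0w G1w]] := mls_linked eta_mls eG0 eG1.
have : (T0 `|` T1) w by rewrite T01.
by case=> [/(G0T0 _ G0w)|/(G1T1 _ G1w)].
Qed.

Lemma selection_finite y eta (s : seq (set X)) : mls eta ->
  (forall T, T \in s -> subbase_trace y eta T) ->
  exists2 p, f p = y & forall T, T \in s -> T p.
Proof.
move=> eta_mls; elim: s => [|T s IH] s_trace.
  by have [p fp] := f_surj y; exists p.
have [a fa sa] : exists2 a, f a = y & forall U, U \in s -> U a.
  by apply: IH => U Us; apply: s_trace; rewrite inE Us orbT.
have [ST eT [b [Tb fb]]] := s_trace T (mem_head _ _).
pose M := [set U | U = T \/ U \in s].
have M_trace U : M U -> subbase_trace y eta U.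
  by case=> [->|Us]; apply: s_trace; rewrite inE ?eqxx ?Us ?orbT.
have MS U : M U -> S U by case/M_trace.
have M_linked : linked M.
  by move=> U V /M_trace[_ eU _] /M_trace[_ eV _]; apply: (mls_linked eta_mls).
have M_ab U : M U -> U a \/ U b by case=> [->|/sa]; [right|left].
have [w fw Mw] :=
  binary_convex_meets S_binary (@f_convex y) fa fb MS M_linked M_ab.
exists w => // U; rewrite inE => /orP [/eqP ->|Us].
  by apply: Mw; left.
by apply: Mw; right.
Qed.

Lemma selection_exists y eta : mls eta -> exists p, selection y eta p.
Proof.
move=> eta_mls; pose D := [set f @^-1` [set y]] `|` subbase_trace y eta.
have D_finI : finI D id.
  move=> D' D'D; pose s := [seq T <- D' | `[< subbase_trace y eta T >]].
  have s_trace T : T \in s -> subbase_trace y eta T.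
    by rewrite mem_filter => /andP [/asboolP].
  have [p fp sp] := selection_finite eta_mls s_trace.
  exists p => T /= TD'; have /set_mem [->//|trT] := D'D _ TD'.
  by apply: sp; rewrite mem_filter TD' andbT; apply/asboolP.
have D_filter := finI_filter D_finI.
have [p [_ p_cluster]] := X_compact D_filter filterT.
have Dp T : D T -> T p.
  move=> DT; have cT : closed T.
    by case: DT => [->|[/S_closed]].
  apply: cT => B /p_cluster; apply; exists T => //; exact: finI_from1.
by exists p; split; [apply: Dp; left|move=> T trT; apply: Dp; right].
Qed.

(* The default x0 is never returned: [selection y eta] is a singleton. *)
Definition select (y : Y) (eta : superext X) : X :=
  xget x0 (selection y eta).

Lemma selectP y (eta : superext X) : selection y eta (select y eta).
Proof. by apply: xgetPex; exact: selection_exists (sx_mls eta). Qed.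

Lemma select_point_system x : select (f x) (point_system X_T1 x) = x.
Proof.
apply: (selection_unique (sx_mls _) (selectP _ _)).
by split => // T [_ [_ Tx] _].
Qed.

Lemma select_eventually_in y0 (eta0 : superext X) T0 T1 :
  S T0 -> S T1 -> T0 `|` T1 = setT -> ~ T1 (select y0 eta0) ->
  \forall ye \near (y0, eta0), T0 (select ye.1 ye.2).
Proof.
(* If T1 \in eta0, then y0 lies in the open set Y \ f(T1), on which the
   selection avoids T1; otherwise eta0 \in (X \ T1)^+ and y0 \in f(X \ T1),
   and near such a pair T0 belongs to eta and meets the fibre. *)
move=> ST0 ST1 /cover_subC T1C_T0 nT1p.
have cT1 := S_closed ST1.
have [fp sp] := selectP y0 eta0.
have [eT1|neT1] := pselect (sx_sys eta0 T1).
- exists (~` (f @` T1), setT) => /=.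
    split; last exact: filterT.
    apply: open_nbhs_nbhs; split.
      rewrite openC; apply: compact_closed Y_hausdorff _.
      apply: continuous_compact; first exact: continuous_subspaceT.
      exact: subclosed_compact cT1 X_compact (subsetT _).
    by move=> [x T1x fx]; apply: nT1p; apply: sp; split => //; exists x.
  move=> [y eta] [/= nfT1 _]; apply: T1C_T0 => T1s.
  by apply: nfT1; exists (select y eta) => //; have [] := selectP y eta.
- have [G1 eG1 /disjoints_subset G1T1] :=
    mls_disjoint (sx_mls eta0) X_nonempty cT1 neT1.
  exists (f @` (~` T1), plus_set (~` T1)) => /=.
    split; apply: open_nbhs_nbhs; split.
    + exact: f_open (closed_openC cT1).
    + by exists (select y0 eta0).
    + exact: plus_set_open (closed_openC cT1).
    + by exists G1.
  move=> [y eta] [/= [q nT1q fq] [G eG GT1]].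
  have [_ sy] := selectP y eta; apply: sy; split => //.
    apply: (mls_superset (sx_mls eta) eG (S_closed ST0)).
    exact: subset_trans GT1 T1C_T0.
  by exists q; split; [exact: T1C_T0|].
Qed.

Lemma select_continuous :
  continuous (fun ye : Y * superext X => select ye.1 ye.2).
Proof.
move=> [y0 eta0] W /=; rewrite nbhsE => -[V [oV Vp] VW].
have K_compact : compact (~` V).
  exact: subclosed_compact (open_closedC oV) X_compact (subsetT _).
have K_cover q : (~` V) q ->
    \forall x \near q & ye \near (y0, eta0), select ye.1 ye.2 <> x.
  move=> nVq; have pq : select y0 eta0 <> q.
    by move=> pq; apply: nVq; rewrite -pq.
  have [T0 [T1 [ST0 ST1 T01 [_ nT1p] [_ nT0q]]]] := S_cover pq.
  exists (~` T0, [set ye | T0 (select ye.1 ye.2)]).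
    split; last exact: (select_eventually_in ST0 ST1 T01 nT1p).
    apply: open_nbhs_nbhs; split => //.
    exact: closed_openC (S_closed ST0).
  by move=> [x ye] [/= nT0x T0s] sx; apply: nT0x; rewrite -sx.
have near_cover := iffLR (compact_near_coveringP _) K_compact _ _
  (fun ye x => select ye.1 ye.2 <> x) (nbhs_filter (y0, eta0)) K_cover.
suff : nbhs (y0, eta0) [set ye | W (select ye.1 ye.2)] by [].
apply: (filterS _ near_cover) => ye ye_cover.
by apply: VW; apply: contrapT => nV; exact: ye_cover _ nV erefl.
Qed.

Lemma soft_of_superext_AE (A : space_class) :
  (forall Z, A Z -> AE_for (superext X) Z) -> soft A f.
Proof.
move=> lambdaX_AE Z AZ B k h cB k_cont h_cont fh_k.
have xi_h_cont : {within B, continuous (point_system X_T1 \o h)}.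
  move=> z; apply: (@continuous_comp (subspace B) X _ (from_subspace B h)).
    exact: h_cont.
  exact: point_system_continuous.
have [Psi [Psi_cont Psi_h]] := lambdaX_AE Z AZ B _ cB xi_h_cont.
exists (fun z => select (k z) (Psi z)); split.
- move=> z; apply: (@continuous_comp _ _ _ (fun z => (k z, Psi z))
    (fun ye => select ye.1 ye.2)); last exact: select_continuous.
  exact: cvg_pair (k_cont z) (Psi_cont z).
- by move=> z Bz; rewrite Psi_h //= -fh_k // select_point_system.
- by move=> z; have [] := selectP (k z) (Psi z).
Qed.

End Selection.

Unset Implicit Arguments. Set Strict Implicit.

Theorem corollary3p2 (A : space_class) (X : topologicalType)
    (S : set (set X)) :
  (forall Z, A Z -> tychonoff_space Z) ->
  compactum X ->
  closed_subbase S -> binary_family S -> normal_family S ->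
  (forall Z, A Z -> AE_for (superext X) Z) ->
  forall (Y : topologicalType) (f : X -> Y),
    tychonoff_space Y -> continuous f ->
    (forall y : Y, exists x : X, f x = y) ->
    open_map f -> S_convex_map S f ->
    soft A f.
Proof.
move=> _ [X_compact X_hausdorff] S_subbase S_binary S_normal lambdaX_AE
  Y f [_ Y_hausdorff] f_cont f_surj f_open f_convex.
have X_T1 (x : X) : closed [set x].
  by apply: accessible_closed_set1; exact: hausdorff_accessible.
(* Binarity of S for the empty family makes X nonempty. *)
have [x0 _] : \bigcap_(T in @set0 (set X)) T !=set0.
  by apply: S_binary => // T T' [].
exact: (soft_of_superext_AE x0 S_subbase X_T1 S_binary S_normal X_compact
  Y_hausdorff f_cont f_surj f_open f_convex lambdaX_AE).
Qed.
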